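(* Let $n$ be an odd positive integer. There exists an ordering $w_0, w_1, \ldots, w_{2^n-3}$ of the set $\mathbb{Z}_2^n\setminus\{00\cdots0,\,11\cdots1\}$ in which every two consecutive words differ in exactly one bit position, and such that for every word $w$ in the set, the positions of $w$ and of its complement $\overline{w}$ in the ordering differ by exactly $2^{n-1}-1$.
   Context: For a binary word $w\in\mathbb{Z}_2^n$, its complement $\overline{w}$ is obtained by changing every $0$ to $1$ and every $1$ to $0$ (equivalently $\overline{w}=w+11\cdots1$). *)

From mathcomp Require Import all_boot.
Set Implicit Arguments. Unset Strict Implicit. Unset Printing Implicit Defensive.

Definition word (n : nat) := {ffun 'I_n -> bool}.

Definition compl n (w : word n) : word n := [ffun i => ~~ w i].

Definition zeros n : word n := [ffun => false].
Definition ones n : word n := [ffun => true].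

Definition hdist n (u v : word n) : nat := #|[pred i | u i != v i]|.

From mathcomp Require Import all_boot zify.
Set Implicit Arguments. Unset Strict Implicit. Unset Printing Implicit Defensive.

(* Call a Gray ordering of the nonzero words of length m antipodal when it ends
   at the complement of its first word.  Appending a final 0 to an ordering P
   and continuing with the reflected Gray code (final bit 1) that starts where
   P ends orders the nonzero words of length m + 1.  The reflected Gray code
   from u ends at u with its first bit flipped, so doing this twice, the two
   flips cancel: an antipodal ordering from v yields one of length m + 2 from
   v00 to its complement.  Starting from the empty ordering, antipodal
   orderings exist for every even m.  For n = m + 1, the words of such a P with
   a final 0, followed by their complements with a final 1, list every word
   except 0...0 and 1...1, the junction is a single bit flip, and the
   complement of each word of the first half sits 2^m - 1 places later. *)

Definition hamming (u v : seq bool) : nat := count (fun p => p.1 != p.2) (zip u v).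

Definition adjacent (u v : seq bool) : bool := (size u == size v) && (hamming u v == 1).

Lemma hamming_cons a b u v : hamming (a :: u) (b :: v) = (a != b) + hamming u v.
Proof. by []. Qed.

Lemma hamming_rcons a b u v :
  size u = size v -> hamming (rcons u a) (rcons v b) = hamming u v + (a != b).
Proof. by move=> suv; rewrite /hamming zip_rcons // -cats1 count_cat /= addn0. Qed.

Lemma hamming_map (I : Type) (f g : I -> bool) (s : seq I) :
  hamming (map f s) (map g s) = count (fun i => f i != g i) s.
Proof. by rewrite /hamming zip_map count_map. Qed.

Lemma hammingxx u : hamming u u = 0.
Proof. by rewrite -[u]map_id hamming_map; elim: u => //= a u ->; rewrite eqxx. Qed.

Lemma hammingC u v : hamming u v = hamming v u.
Proof. by elim: u v => [|a u IH] [|b v] //; rewrite !hamming_cons IH eq_sym. Qed.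

Lemma hamming_negb u v : hamming (map negb u) (map negb v) = hamming u v.
Proof.
by elim: u v => [|a u IH] [|b v] //=; rewrite !hamming_cons IH; case: a; case: b.
Qed.

Lemma adjacentC u v : adjacent u v = adjacent v u.
Proof. by rewrite /adjacent hammingC eq_sym. Qed.

Lemma adjacent_cons b : {mono cons b : u v / adjacent u v}.
Proof. by move=> u v; rewrite /adjacent /= eqSS hamming_cons eqxx. Qed.

Lemma adjacent_flip b u : adjacent (b :: u) (~~ b :: u).
Proof. by rewrite /adjacent eqxx hamming_cons hammingxx; case: b. Qed.

Lemma adjacent_rcons b : {mono rcons^~ b : u v / adjacent u v}.
Proof.
move=> u v; rewrite /adjacent !size_rcons eqSS.
by case: eqP => //= /(hamming_rcons b b) ->; case: b; rewrite /= addn0.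
Qed.

Lemma adjacent_rcons_flip u : adjacent (rcons u false) (rcons u true).
Proof. by rewrite /adjacent !size_rcons eqxx hamming_rcons // hammingxx. Qed.

Lemma adjacent_negb : {mono map negb : u v / adjacent u v}.
Proof. by move=> u v; rewrite /adjacent !size_map hamming_negb. Qed.

Lemma path_map_adjacent f : {mono f : u v / adjacent u v} ->
  forall x s, path adjacent (f x) (map f s) = path adjacent x s.
Proof. by move=> f_mono x s; rewrite path_map; apply: eq_path. Qed.

Lemma map_negbK : involutive (map negb).
Proof. exact: mapK negbK. Qed.

Lemma map_negb_inj : injective (map negb).
Proof. exact: inv_inj map_negbK. Qed.

Lemma mem_map_negb x (P : seq (seq bool)) :
  (x \in map (map negb) P) = (map negb x \in P).
Proof. by rewrite -{1}(map_negbK x) (mem_map map_negb_inj). Qed.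

Lemma index_map_negb x (P : seq (seq bool)) :
  index x (map (map negb) P) = index (map negb x) P.
Proof. by rewrite -{1}(map_negbK x) (index_map map_negb_inj). Qed.

Lemma mem_map_cons (T : eqType) (a b : T) l (X : seq (seq T)) :
  (a :: l \in map (cons b) X) = (a == b) && (l \in X).
Proof.
apply/mapP/andP => [[y yX [-> ->]]|[/eqP -> lX]]; first by rewrite eqxx.
by exists l.
Qed.

Lemma mem_map_rcons (T : eqType) (a b : T) l (X : seq (seq T)) :
  (rcons l a \in map (rcons^~ b) X) = (a == b) && (l \in X).
Proof.
apply/mapP/andP => [[y yX /rcons_inj [-> ->]]|[/eqP -> lX]]; first by rewrite eqxx.
by exists l.
Qed.

Lemma rcons_nseq (T : Type) m (x : T) : rcons (nseq m x) x = nseq m.+1 x.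
Proof. by rewrite -cats1 -addn1 nseqD. Qed.

Definition flip_head (u : seq bool) : seq bool :=
  if u is b :: u' then ~~ b :: u' else [::].

Lemma size_flip_head u : size (flip_head u) = size u.
Proof. by case: u. Qed.

Lemma flip_headK : involutive flip_head.
Proof. by case=> //= b u; rewrite negbK. Qed.

Lemma flip_head_rcons u b : u != [::] -> flip_head (rcons u b) = rcons (flip_head u) b.
Proof. by case: u. Qed.

Fixpoint gray (u : seq bool) : seq (seq bool) :=
  if u is b :: u' then map (cons b) (gray u') ++ map (cons (~~ b)) (rev (gray u'))
  else [:: [::]].

Lemma gray_head u : gray u = u :: behead (gray u).
Proof. by elim: u => //= b u IH; rewrite IH. Qed.

Lemma size_gray u : size (gray u) = 2 ^ size u.
Proof.
elim: u => //= b u IH.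
by rewrite size_cat !size_map size_rev IH expnS mul2n addnn.
Qed.

Lemma mem_gray u l : (l \in gray u) = (size l == size u).
Proof.
elim: u l => [|b u IH] [|a l] /=; rewrite ?inE //.
  by apply/negP; rewrite mem_cat => /orP [] /mapP [y _].
rewrite mem_cat !mem_map_cons mem_rev IH eqSS.
by case: a; case: b; rewrite /= ?andbF ?orbF.
Qed.

Lemma uniq_gray u : uniq (gray u).
Proof.
elim: u => //= b u IH.
rewrite cat_uniq !map_inj_uniq ?rev_uniq ?IH ?andbT /=; try by move=> x y [].
by apply/hasPn => x /mapP [y _ ->]; rewrite mem_map_cons; case: b.
Qed.

Lemma sorted_gray u : sorted adjacent (gray u).
Proof.
elim: u => //= b u; rewrite gray_head; set t := behead (gray u) => /= IH.
rewrite cat_path (path_map_adjacent (adjacent_cons b)) IH /= last_map.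
rewrite (lastI u t) rev_rcons /= adjacent_flip (path_map_adjacent (adjacent_cons _)).
by rewrite rev_path (eq_path (e' := adjacent)) // => x y; rewrite adjacentC.
Qed.

Lemma last_gray u : last [::] (gray u) = flip_head u.
Proof.
by case: u => // b u; rewrite /= last_cat (gray_head u) rev_cons map_rcons last_rcons.
Qed.

Definition extend (P X : seq (seq bool)) : seq (seq bool) :=
  map (rcons^~ false) P ++ map (rcons^~ true) X.

Lemma size_extend P X : size (extend P X) = size P + size X.
Proof. by rewrite size_cat !size_map. Qed.

Lemma uniq_extend P X : uniq P -> uniq X -> uniq (extend P X).
Proof.
move=> uP uX; rewrite cat_uniq !map_inj_uniq ?uP ?uX ?andbT //; try exact: rcons_injl.
by apply/hasPn => _ /mapP [x _ ->]; rewrite mem_map_rcons.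
Qed.

Lemma mem_extend_nil P X : ([::] \in extend P X) = false.
Proof.
apply/negbTE; rewrite mem_cat; apply/norP.
by split; apply/mapP => -[y _] /(congr1 size); rewrite size_rcons.
Qed.

Lemma mem_extend P X x b :
  (rcons x b \in extend P X) = if b then x \in X else x \in P.
Proof. by rewrite mem_cat !mem_map_rcons; case: b; rewrite /= ?orbF. Qed.

Lemma index_extend_false P X x :
  x \in P -> index (rcons x false) (extend P X) = index x P.
Proof.
by move=> xP; rewrite index_cat (mem_map (rcons_injl false)) xP (index_map (rcons_injl false)).
Qed.

Lemma index_extend_true P X x :
  index (rcons x true) (extend P X) = size P + index x X.
Proof. by rewrite index_cat mem_map_rcons /= size_map (index_map (rcons_injl true)). Qed.

Lemma sorted_extend v r t :
  sorted adjacent (v :: r) -> sorted adjacent (last v r :: t) ->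
  sorted adjacent (extend (v :: r) (last v r :: t)).
Proof.
move=> /= adj_r adj_t; rewrite cat_path (path_map_adjacent (adjacent_rcons false)) adj_r /=.
rewrite (last_map (rcons^~ false)) adjacent_rcons_flip.
by rewrite (path_map_adjacent (adjacent_rcons true)).
Qed.

Lemma last_extend P u t : last [::] (extend P (u :: t)) = rcons (last [::] (u :: t)) true.
Proof. by rewrite last_cat /= (last_map (rcons^~ true)). Qed.

Definition extend_gray (P : seq (seq bool)) : seq (seq bool) :=
  extend P (gray (last [::] P)).

Lemma extend_gray_neq0 P : extend_gray P != [::].
Proof. by case: P. Qed.

Lemma head_extend_gray P :
  P != [::] -> head [::] (extend_gray P) = rcons (head [::] P) false.
Proof. by case: P. Qed.

Lemma last_extend_gray P :
  last [::] (extend_gray P) = rcons (flip_head (last [::] P)) true.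
Proof.
by rewrite /extend_gray (gray_head (last [::] P)) last_extend -gray_head last_gray.
Qed.

Lemma exp2_pred_eq0 m : (2 ^ m).-1 = 0 -> m = 0.
Proof. by case: m => // m; rewrite expnS; have := expn_gt0 2 m; lia. Qed.

Definition nonzero_gray_code m (P : seq (seq bool)) :=
  [/\ uniq P, forall l, (l \in P) = (size l == m) && (l != nseq m false),
      size P = (2 ^ m).-1 & sorted adjacent P].

Lemma extend_gray_code m P :
  nonzero_gray_code m P -> nonzero_gray_code m.+1 (extend_gray P).
Proof.
case=> uP memP sizeP adjP.
have size_last : size (last [::] P) = m.
  case: P {uP adjP} memP sizeP => [_ /esym/exp2_pred_eq0 -> //|v r memP _].
  by move: (mem_last v r); rewrite memP => /andP [/eqP].
split.
- by apply: uniq_extend; rewrite ?uniq_gray.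
- case/lastP => [|x b]; first by rewrite mem_extend_nil.
  rewrite mem_extend size_rcons eqSS -rcons_nseq eqseq_rcons.
  by case: b; rewrite ?mem_gray ?size_last ?memP /= ?andbF ?andbT.
- by rewrite size_extend size_gray size_last sizeP expnS; have := expn_gt0 2 m; lia.
case: P adjP {uP memP sizeP size_last} => // v r adj_r.
rewrite /extend_gray (gray_head (last _ _)).
by apply: sorted_extend; rewrite -?gray_head ?sorted_gray.
Qed.

Definition antipodal_gray_code m (P : seq (seq bool)) :=
  nonzero_gray_code m P /\ last [::] P = map negb (head [::] P).

Lemma antipodal_gray_code_double m P :
  antipodal_gray_code m P -> antipodal_gray_code m.+2 (extend_gray (extend_gray P)).
Proof.
case=> codeP antiP; split; first by do 2 apply: extend_gray_code.
case: codeP antiP => _ memP _ _.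
case: P memP => [//|v r memP last_r].
have v_neq0 : v != [::].
  by move: (mem_head v r); rewrite memP => /andP [/eqP <-]; apply: contra_neq => ->.
rewrite !last_extend_gray !head_extend_gray ?extend_gray_neq0 // last_r /=.
rewrite flip_head_rcons ?flip_headK ?map_rcons //.
by rewrite -size_eq0 size_flip_head size_map size_eq0.
Qed.

Lemma exists_antipodal_gray_code k : exists P, antipodal_gray_code k.*2 P.
Proof.
elim: k => [|k [P codeP]]; first by exists [::]; split => //; split => // -[].
by exists (extend_gray (extend_gray P)); apply: antipodal_gray_code_double.
Qed.

Definition antipodal_ordering n d (S : seq (seq bool)) :=
  [/\ uniq S,
      forall l, (l \in S) = [&& size l == n, l != nseq n false & l != nseq n true],
      sorted adjacent S
    & {in S, forall l, index l S + d = index (map negb l) S \/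
                       index (map negb l) S + d = index l S}].

Lemma antipodal_ordering_extend m P :
  antipodal_gray_code m P ->
  antipodal_ordering m.+1 (2 ^ m).-1 (extend P (map (map negb) P)).
Proof.
case=> -[uP memP sizeP adjP] antiP; split.
- by apply: uniq_extend; rewrite ?(map_inj_uniq map_negb_inj).
- case/lastP => [|x b]; first by rewrite mem_extend_nil.
  rewrite mem_extend size_rcons eqSS -!rcons_nseq !eqseq_rcons.
  case: b; rewrite ?mem_map_negb memP ?size_map ?andbF ?andbT /= ?andbT //.
  have -> : nseq m false = map negb (nseq m true) by rewrite map_nseq.
  by rewrite (inj_eq map_negb_inj).
- case: P adjP antiP {uP memP sizeP} => // v r adj_r /= last_r.
  have := @sorted_extend v r (map (map negb) r) adj_r; rewrite last_r.
  by apply; rewrite /= (path_map_adjacent adjacent_negb).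
case/lastP => [|x b]; first by rewrite mem_extend_nil.
rewrite mem_extend map_rcons -sizeP.
case: b => /= xP; last first.
  left; rewrite index_extend_false // index_extend_true.
  by rewrite index_map_negb map_negbK addnC.
right; rewrite index_extend_true index_extend_false -?mem_map_negb //.
by rewrite index_map_negb addnC.
Qed.

Definition seq_of_word n (w : word n) : seq bool := map w (enum 'I_n).

Definition word_of_seq n (l : seq bool) : word n := [ffun i : 'I_n => nth false l i].

Lemma size_seq_of_word n (w : word n) : size (seq_of_word w) = n.
Proof. by rewrite size_map size_enum_ord. Qed.

Lemma seq_of_wordK n : cancel (@seq_of_word n) (word_of_seq n).
Proof.
move=> w; apply/ffunP => i; rewrite ffunE (nth_map i) ?size_enum_ord //.
by rewrite nth_ord_enum.
Qed.

Lemma seq_of_word_inj n : injective (@seq_of_word n).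
Proof. exact: can_inj (@seq_of_wordK n). Qed.

Lemma word_of_seqK n l : size l = n -> seq_of_word (word_of_seq n l) = l.
Proof.
move=> size_l; rewrite /seq_of_word (eq_map (g := nth false l \o val : 'I_n -> bool)).
  by rewrite map_comp val_enum_ord -size_l; apply: mkseq_nth.
by move=> i; rewrite ffunE.
Qed.

Lemma seq_of_word_const n b : seq_of_word [ffun _ : 'I_n => b] = nseq n b.
Proof.
have -> : [ffun _ : 'I_n => b] = word_of_seq n (nseq n b).
  by apply/ffunP => i; rewrite !ffunE nth_nseq ltn_ord.
by rewrite word_of_seqK ?size_nseq.
Qed.

Lemma seq_of_word_compl n (w : word n) :
  seq_of_word (compl w) = map negb (seq_of_word w).
Proof. by rewrite /seq_of_word -map_comp; apply: eq_map => i; rewrite ffunE. Qed.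

Lemma hdist_seq_of_word n (u v : word n) :
  hdist u v = hamming (seq_of_word u) (seq_of_word v).
Proof. by rewrite hamming_map enumT /hdist cardE /enum_mem size_filter. Qed.

Lemma antipodal_word_ordering n d S : antipodal_ordering n d S ->
  exists s : seq (word n),
    [/\ uniq s,
        (forall w : word n, (w \in s) = (w != zeros n) && (w != ones n)),
        (forall i, i.+1 < size s -> hdist (nth (zeros n) s i) (nth (zeros n) s i.+1) = 1)
      & (forall w, w \in s ->
           (index w s + d = index (compl w) s) \/ (index (compl w) s + d = index w s))].
Proof.
case=> uS memS adjS antiS.
set s := map (word_of_seq n) S.
have sK : map (@seq_of_word n) s = S.
  rewrite -map_comp map_id_in // => l; rewrite memS => /andP [/eqP sl _].
  exact: word_of_seqK.
have mem_s w : (w \in s) = (seq_of_word w \in S).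
  by rewrite -sK (mem_map (@seq_of_word_inj n)).
have index_s w : index w s = index (seq_of_word w) S.
  by rewrite -sK (index_map (@seq_of_word_inj n)).
exists s; split.
- by rewrite -(map_inj_uniq (@seq_of_word_inj n)) sK.
- move=> w; rewrite mem_s memS size_seq_of_word eqxx /= -!seq_of_word_const.
  by rewrite !(inj_eq (@seq_of_word_inj n)).
- move=> i; rewrite size_map => lt_i.
  rewrite hdist_seq_of_word -!(nth_map _ (seq_of_word (zeros n))) ?size_map ?(ltnW lt_i) // sK.
  by have /andP [_ /eqP] := sortedP (seq_of_word (zeros n)) adjS i lt_i.
by move=> w; rewrite mem_s !index_s seq_of_word_compl; apply: antiS.
Qed.

Theorem theorem1 (n : nat) (hn : odd n) :
  exists s : seq (word n),
    [/\ uniq s,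
        (forall w : word n, (w \in s) = (w != zeros n) && (w != ones n)),
        (forall i, i.+1 < size s -> hdist (nth (zeros n) s i) (nth (zeros n) s i.+1) = 1)
      & (forall w, w \in s ->
           (index w s + (2 ^ n.-1).-1 = index (compl w) s) \/
           (index (compl w) s + (2 ^ n.-1).-1 = index w s))].
Proof.
rewrite -(odd_double_half n) hn add1n.
have [P codeP] := exists_antipodal_gray_code n./2.
exact: antipodal_word_ordering (antipodal_ordering_extend codeP).
Qed.
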